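(* Let $A$ be a payoff Conway game. (1) Every winning strategy on $A$ plays only plays that are well-parenthesized for Player. (2) For every winning strategy $\sigma$ on $A$ and every winning strategy $\tau$ on $A^*\otimes\mathnormal{2}$, every play of the interaction $\sigma\Join\tau$ is well-parenthesized (for both Player and Opponent).
   Context: A Conway game $A=(V_A,E_A,\lambda_A)$ is a rooted directed graph with root $\star_A$ and polarity $\lambda_A:E_A\to\{-1,+1\}$ ($-1$ Opponent, $+1$ Player). Paths $s:x\twoheadrightarrow y$ are finite sequences of consecutive moves; $\epsilon_x$ is the empty path; $s;t$ concatenation; plays are paths from the root; alternating means consecutive moves have opposite polarities. A strategy on $A$ is a set of alternating even-length plays containing the empty play, whose nonempty plays start with Opponent, closed under even-length prefixes, and deterministic. A payoff Conway game has $\kappa_A=(\kappa_A^+,\kappa_A^-):\mathrm{Path}_A\to\mathbb{N}\times\mathbb{N}$ with: $\lambda_A(m)=-1\Rightarrow\kappa_A^+(m)=0$, $\lambda_A(m)=+1\Rightarrow\kappa_A^-(m)=0$; $\kappa_A(t)\le\kappa_A(s;t)$; $\kappa_A(s;t)\le\kappa_A(s)+\kappa_A(t)$; $\kappa_A(\epsilon_x)=(0,0)$. The dual $A^*$ reverses polarities and swaps $\kappa^+,\kappa^-$; the tensor $A\otimes B$ is the product graph with moves of either component, polarities inherited, and $\kappa_{A\otimes B}(s)=\kappa_A(s_{|A})+\kappa_B(s_{|B})$. A strategy plays a path $t:x\twoheadrightarrow y$ if some play $s:\star\twoheadrightarrow x$ in it has $s;t$ in it; it is winning if every path $s$ it plays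 satisfies $\kappa^+(s)=0\Rightarrow\kappa^-(s)=0$. A play $s$ is well-parenthesized for Player if every even-length path $t$ occurring in $s$ (as a segment) and ending with a Player move satisfies $\kappa_A^+(t)=0\Rightarrow\kappa_A^-(t)=0$; well-parenthesized for Opponent if every even-length path $t$ in $s$ ending with an Opponent move satisfies $\kappa_A^-(t)=0\Rightarrow\kappa_A^+(t)=0$; well-parenthesized if both. $\mathnormal{2}$ is the payoff game with graph $\bullet\xrightarrow{o}\bullet$: a single Opponent move $o$ with payoff $(0,0)$ (all its paths have payoff $(0,0)$). For $\sigma$ on $A$ and $\tau$ on $A^*\otimes\mathnormal{2}$, the interaction is $\sigma\Join\tau=\{\epsilon\}\cup\{s\cdot m\mid s\cdot m\in\sigma\text{ and } o\cdot s\in\tau\}$, where $s$ is a play and $m$ a move. *)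

From mathcomp Require Import all_boot.
Set Implicit Arguments. Unset Strict Implicit. Unset Printing Implicit Defensive.

Variant polarity := Opponent | Player.

Definition opp_pol (p : polarity) : polarity :=
  match p with Opponent => Player | Player => Opponent end.

(* A path is represented by its list of
   moves; the empty path eps_x (for any x) is the empty list, which is
   harmless since kappa(eps_x) = (0,0) for every x.
   kappa s = (kappa^+ s, kappa^- s). *)
Record cgame := CGame {
  pos : Type;
  mov : Type;
  src : mov -> pos;
  tgt : mov -> pos;
  root : pos;
  pol : mov -> polarity;
  kappa : seq mov -> nat * nat
}.

Section Paths.
Variable A : cgame.

Fixpoint is_path (s : seq (mov A)) : Prop :=
  match s with
  | [::] => True
  | m :: s' => match s' with
               | [::] => True
               | n :: _ => tgt m = src n /\ is_path s'
               end
  end.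

Definition path_ft (x y : pos A) (s : seq (mov A)) : Prop :=
  is_path s /\
  match s with
  | [::] => x = y
  | m :: _ => src m = x /\ tgt (last m s) = y
  end.

Definition is_play (s : seq (mov A)) : Prop := exists y, path_ft (root A) y s.

Fixpoint alternating (s : seq (mov A)) : Prop :=
  match s with
  | [::] => True
  | m :: s' => match s' with
               | [::] => True
               | n :: _ => pol m <> pol n /\ alternating s'
               end
  end.

Definition le_pair (a b : nat * nat) : Prop := a.1 <= b.1 /\ a.2 <= b.2.
Definition add_pair (a b : nat * nat) : nat * nat := (a.1 + b.1, a.2 + b.2).

Definition is_payoff_game : Prop :=
  (forall m, pol m = Opponent -> (@kappa A [:: m]).1 = 0) /\
  (forall m, pol m = Player -> (@kappa A [:: m]).2 = 0) /\
  (forall s t, is_path (s ++ t) -> le_pair (@kappa A t) (@kappa A (s ++ t))) /\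
  (forall s t, is_path (s ++ t) ->
      le_pair (@kappa A (s ++ t)) (add_pair (@kappa A s) (@kappa A t))) /\
  @kappa A [::] = (0, 0).

Definition is_strategy (sigma : seq (mov A) -> Prop) : Prop :=
  (forall s, sigma s -> is_play s /\ alternating s /\ ~~ odd (size s)) /\
  sigma [::] /\
  (forall m s, sigma (m :: s) -> pol m = Opponent) /\
  (forall s t, sigma (s ++ t) -> ~~ odd (size s) -> sigma s) /\
  (forall s m n n', sigma (rcons (rcons s m) n) ->
                    sigma (rcons (rcons s m) n') -> n = n').

Definition plays (sigma : seq (mov A) -> Prop) (t : seq (mov A)) : Prop :=
  exists x y s, path_ft (root A) x s /\ path_ft x y t /\ sigma s /\ sigma (s ++ t).

Definition winning (sigma : seq (mov A) -> Prop) : Prop :=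
  forall t, plays sigma t -> (@kappa A t).1 = 0 -> (@kappa A t).2 = 0.

Definition wp_player (s : seq (mov A)) : Prop :=
  forall u t v m, s = u ++ rcons t m ++ v -> ~~ odd (size (rcons t m)) ->
    pol m = Player ->
    (@kappa A (rcons t m)).1 = 0 -> (@kappa A (rcons t m)).2 = 0.

Definition wp_opponent (s : seq (mov A)) : Prop :=
  forall u t v m, s = u ++ rcons t m ++ v -> ~~ odd (size (rcons t m)) ->
    pol m = Opponent ->
    (@kappa A (rcons t m)).2 = 0 -> (@kappa A (rcons t m)).1 = 0.

Definition well_parenthesized (s : seq (mov A)) : Prop :=
  wp_player s /\ wp_opponent s.

End Paths.

Definition dual (A : cgame) : cgame :=
  @CGame (pos A) (mov A) (@src A) (@tgt A) (root A)
         (fun m => opp_pol (pol m)) (fun s => ((@kappa A s).2, (@kappa A s).1)).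

Definition restrL (A B : cgame) (s : seq ((mov A * pos B) + (pos A * mov B)))
  : seq (mov A) :=
  pmap (fun e => match e with inl (m, _) => Some m | inr _ => None end) s.
Definition restrR (A B : cgame) (s : seq ((mov A * pos B) + (pos A * mov B)))
  : seq (mov B) :=
  pmap (fun e => match e with inl _ => None | inr (_, m) => Some m end) s.

Definition tensor (A B : cgame) : cgame :=
  @CGame (pos A * pos B) ((mov A * pos B) + (pos A * mov B))
    (fun e => match e with inl (m, y) => (src m, y) | inr (x, n) => (x, src n) end)
    (fun e => match e with inl (m, y) => (tgt m, y) | inr (x, n) => (x, tgt n) end)
    (root A, root B)
    (fun e => match e with inl (m, _) => pol m | inr (_, n) => pol n end)
    (fun s => add_pair (@kappa A (restrL s)) (@kappa B (restrR s))).

Definition two : cgame :=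
  @CGame bool unit (fun _ => false) (fun _ => true) false
         (fun _ => Opponent) (fun _ => (0, 0)).

Definition o_cons (A : cgame) (s : seq (mov A)) : seq (mov (tensor (dual A) two)) :=
  inr (root A, tt) :: map (fun m => inl (m, true)) s.

Definition interaction (A : cgame) (sigma : seq (mov A) -> Prop)
    (tau : seq (mov (tensor (dual A) two)) -> Prop) (u : seq (mov A)) : Prop :=
  u = [::] \/
  exists s m, u = rcons s m /\ is_play (rcons s m) /\
              sigma (rcons s m) /\ tau (o_cons s).

(* Plays of a strategy alternate and start with an Opponent move, so the move at
   (0-based) position i is Player's exactly when i is odd.  An even-length
   segment ending with a Player move therefore starts at an even position: it
   joins two plays of sigma, and sigma being winning is precisely the required
   implication.  In a play s m of the interaction the last move m is Player's,
   so an even-length segment ending with an Opponent move lies inside s and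
   starts at an odd position; in o.s it is shifted by one, so it joins two plays
   of tau, and winning for tau in A^*, where the payoff components are swapped,
   is the Opponent condition in A. *)

From Pilot Require Import Defs.
From mathcomp Require Import all_boot.
Set Implicit Arguments. Unset Strict Implicit. Unset Printing Implicit Defensive.

Lemma alternating_pol (A : cgame) (a b : seq (mov A)) (m : mov A) :
  alternating (a ++ m :: b) ->
  pol m = if odd (size a) then opp_pol (pol (head m a)) else pol (head m a).
Proof.
elim: a => [|x a IH] //=.
case: a IH => [|y a] IH /= [neq_xy alt].
  by case: (pol x) (pol m) neq_xy => [] [].
rewrite (IH alt) /=.
by case: odd; case: (pol x) (pol y) neq_xy => [] [].
Qed.

Lemma path_ft_cat (A : cgame) (x y : pos A) (s t : seq (mov A)) :
  path_ft x y (s ++ t) -> exists z, path_ft x z s /\ path_ft z y t.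
Proof.
elim: s x => [|m s IH] x /=; first by exists x.
case: s IH => [|n s] IH.
  move=> [st [<- <-]] {IH}; exists (tgt m); split=> //.
  by case: t st => [|n t] //= [-> st].
move=> [/= [tgt_m st] [<- tgt_last]].
have [z [[sn [_ tgt_z]] zt]] := IH (src n) (conj st (conj erefl tgt_last)).
by exists z.
Qed.

Section WinningStrategy.
Variables (A : cgame) (sigma : seq (mov A) -> Prop).
Hypothesis sigmaS : is_strategy sigma.

Lemma strategy_pol (a b : seq (mov A)) (m : mov A) :
  sigma (a ++ m :: b) -> pol m = if odd (size a) then Player else Opponent.
Proof.
have [plays_ok [_ [first_opp _]]] := sigmaS.
move=> sig; have [_ [alt _]] := plays_ok _ sig.
rewrite (alternating_pol alt).
have -> : pol (head m a) = Opponent by case: a sig {alt} => [|x a]; apply: first_opp.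
by case: odd.
Qed.

Lemma strategy_plays_even_segment (a t b : seq (mov A)) :
  sigma (a ++ t ++ b) -> ~~ odd (size a) -> ~~ odd (size t) -> plays sigma t.
Proof.
have [plays_ok [_ [_ [prefix_closed _]]]] := sigmaS.
move=> sig even_a even_t.
have sig_a : sigma a by apply: prefix_closed sig even_a.
have sig_at : sigma (a ++ t).
  apply: (prefix_closed _ b); first by rewrite -catA.
  by rewrite size_cat oddD (negbTE even_a) (negbTE even_t).
have [[y path_at] _] := plays_ok _ sig_at.
have [x [path_a path_t]] := path_ft_cat path_at.
by exists x, y, a.
Qed.

Hypothesis sigmaW : winning sigma.

Lemma winning_even_segment (a t b : seq (mov A)) :
  sigma (a ++ t ++ b) -> ~~ odd (size a) -> ~~ odd (size t) ->
  (kappa t).1 = 0 -> (kappa t).2 = 0.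
Proof. by move=> sig even_a even_t; apply/sigmaW/(strategy_plays_even_segment sig). Qed.

Lemma winning_wp_player (s : seq (mov A)) : sigma s -> wp_player s.
Proof.
move=> sig u t v m def_s even_tm player_m.
have sig' : sigma ((u ++ t) ++ m :: v) by rewrite -catA -cat_rcons -def_s.
have odd_t : odd (size t) by move: even_tm; rewrite size_rcons /= negbK.
have even_u : ~~ odd (size u).
  by move: (strategy_pol sig'); rewrite player_m size_cat oddD odd_t; case: odd.
by apply: (winning_even_segment (a := u) (b := v)); rewrite -?def_s.
Qed.

End WinningStrategy.

Definition lift_dual_two (A : cgame) (m : mov A) : mov (tensor (dual A) two) :=
  inl (m, true).

Lemma o_cons_cat (A : cgame) (a b : seq (mov A)) :
  o_cons (a ++ b) = o_cons a ++ map (@lift_dual_two A) b.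
Proof. by rewrite /o_cons map_cat. Qed.

Lemma kappa_lift_dual_two (A : cgame) (t : seq (mov A)) :
  kappa (map (@lift_dual_two A) t) = ((kappa t).2, (kappa t).1).
Proof.
have restrL_lift : restrL (map (@lift_dual_two A) t) = t by elim: t => //= m t ->.
by rewrite /= restrL_lift /Defs.add_pair /= !addn0.
Qed.

Lemma well_parenthesized_nil (A : cgame) : well_parenthesized (A := A) [::].
Proof.
by split=> u t v m /(congr1 size); rewrite !size_cat size_rcons addSn addnS.
Qed.

Lemma interaction_wp_opponent (A : cgame) (sigma : seq (mov A) -> Prop)
    (tau : seq (mov (tensor (dual A) two)) -> Prop) (s : seq (mov A)) (m : mov A) :
  is_strategy sigma -> is_strategy tau -> winning tau ->
  sigma (rcons s m) -> tau (o_cons s) -> wp_opponent (rcons s m).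
Proof.
move=> sigmaS tauS tauW sig ta u t v m' def_sm even_tm opp_m'.
have odd_s : odd (size s).
  by have [_ [_]] := sigmaS.1 _ sig; rewrite size_rcons /= negbK.
have player_m : pol m = Player.
  by have := strategy_pol sigmaS (a := s) (b := [::]) (m := m); rewrite cats1 odd_s; apply.
have odd_t : odd (size t) by move: even_tm; rewrite size_rcons /= negbK.
case/lastP: v def_sm => [|v last_v].
  rewrite cats0 -rcons_cat => /rcons_inj[_ eq_m].
  by move: opp_m'; rewrite -eq_m player_m.
rewrite -!rcons_cat => /rcons_inj[def_s _].
have odd_u : odd (size u).
  have sig' : sigma ((u ++ t) ++ m' :: rcons v m).
    by rewrite -catA -cat_rcons -!rcons_cat -def_s.
  by move: (strategy_pol sigmaS sig'); rewrite opp_m' size_cat oddD odd_t; case: odd.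
have := winning_even_segment tauS tauW
  (a := o_cons u) (t := map (@lift_dual_two A) (rcons t m')) (b := map (@lift_dual_two A) v).
rewrite -map_cat -o_cons_cat -def_s kappa_lift_dual_two /= !size_map odd_u.
by apply.
Qed.

Theorem mainTheorem4 (A : cgame) :
  is_payoff_game A ->
  (forall sigma : seq (mov A) -> Prop,
      is_strategy sigma -> winning sigma ->
      forall s, sigma s -> wp_player s) /\
  (forall (sigma : seq (mov A) -> Prop)
          (tau : seq (mov (tensor (dual A) two)) -> Prop),
      is_strategy sigma -> winning sigma ->
      is_strategy tau -> winning tau ->
      forall u, interaction sigma tau u -> well_parenthesized u).
Proof.
move=> _; split=> [sigma sigmaS sigmaW|sigma tau sigmaS sigmaW tauS tauW u].
  exact: winning_wp_player.
case=> [->|[s [m [-> [_ [sig ta]]]]]]; first exact: well_parenthesized_nil.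
split; first exact: winning_wp_player sigmaS sigmaW _ sig.
exact: interaction_wp_opponent sigmaS tauS tauW sig ta.
Qed.
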